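(* Let $a>0$, $\mu\in(0,1]$, $0<\lambda<1$ and let $\gamma$ be a local stable leaf. Then the $\theta_a$-diameter of $\mathcal D(\lambda a,\mu,\gamma)$ inside $\mathcal D(a,\mu,\gamma)$, i.e. $\sup\{\theta_a(\rho',\rho''):\rho',\rho''\in\mathcal D(\lambda a,\mu,\gamma)\}$, is at most $D(a):=4a+\log(\tau_2/\tau_1)<\infty$, where $\tau_1:=\inf\{\frac{z-z^{\lambda}}{z-z^{-\lambda}}:z>1\}$ and $\tau_2:=\sup\{\frac{z-z^{-\lambda}}{z-z^{\lambda}}:z>1\}$. In particular, if $\omega$, $a'>0$ and $a$ satisfy $\lambda:=(a'+\bar G(\omega))\lambda_s^\mu/a<1$, then for every leaf $\gamma$ and preimage leaf $\gamma_j$, $$\sup\{\theta_a(\mathscr L_j^\omega\rho',\mathscr L_j^\omega\rho''):\ \rho',\rho''\in\mathcal D(a',\mu,\gamma)\}\le D(a),$$ a bound independent of $\gamma$ and $\gamma_j$.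
   Context: Local stable leaves $\gamma$ of a uniformly hyperbolic set $\Lambda$ of a $C^2$ diffeomorphism $f$ of a compact Riemannian manifold (distance $d\le 1$ on the relevant open set $Q$), with induced Riemannian measures $m_\gamma$. $\mathcal D(a,\mu,\gamma):=\{\rho:\gamma\to\mathbb R:\ \rho>0,\ \rho(x)\le\rho(y)e^{a d(x,y)^\mu}\ \forall x,y\in\gamma\}$, and $\theta_a$ is its Hilbert projective metric: with $v\preceq w$ iff $w-v\in\mathcal D(a,\mu,\gamma)\cup\{0\}$, $\theta_a(v_1,v_2)=\log(\beta/\alpha)$ where $\alpha=\sup\{t>0:tv_1\preceq v_2\}$, $\beta=\inf\{s>0:v_2\preceq sv_1\}$. Constants: $0<\lambda_s<1$ with $d(fx,fy)\le\lambda_s d(x,y)$ on leaves; preimage leaves $\gamma_1,\dots,\gamma_n$ of $\gamma$ satisfy $\gamma\cap f(Q)=\bigcup_jf(\gamma_j)$; $\mathscr L_j^\omega\rho:=\frac{|\det D(f|_{\gamma_j})|}{|\det Df|}(\rho\circ f)(g(Y_1(\omega),\cdot)\circ f)$ on $\gamma_j$, with $g$ a nonnegative likelihood and $G(\omega)$ a log-Lipschitz constant of $g(Y_1(\omega),\cdot)$ on $Q$; $\bar G(\omega):=G(\omega)+(K_1+K_2)/\lambda_s^\mu$ with $K_1,K_2$ Lipschitz constants of $\log|\det Df|$ and $\log|\det D(f|_{\gamma_j})|$. *)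

From mathcomp Require Import all_boot all_order all_algebra.
From mathcomp Require Import all_classical all_reals all_analysis.
Set Implicit Arguments. Unset Strict Implicit. Unset Printing Implicit Defensive.
Import Order.TTheory GRing.Theory Num.Theory.
Local Open Scope classical_set_scope.
Local Open Scope ring_scope.

Section Defs.
Context {R : realType} {M : Type}.

Definition is_dist (d : M -> M -> R) : Prop :=
  (forall x y, 0 <= d x y) /\ (forall x, d x x = 0) /\
  (forall x y, d x y = d y x) /\ (forall x y z, d x z <= d x y + d y z).

Definition cone (d : M -> M -> R) (a mu : R) (S : set M) : set (M -> R) :=
  [set rho | (forall x, S x -> 0 < rho x) /\
    (forall x y, S x -> S y -> rho x <= rho y * expR (a * d x y `^ mu))].

Definition cone_le (d : M -> M -> R) (a mu : R) (S : set M) (v w : M -> R) : Prop :=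
  cone d a mu S (fun x => w x - v x) \/ (forall x, S x -> w x = v x).

Definition hilbert_alpha d a mu S (v1 v2 : M -> R) : \bar R :=
  ereal_sup [set t%:E | t in [set t : R | 0 < t /\ cone_le d a mu S (fun x => t * v1 x) v2]].

Definition hilbert_beta d a mu S (v1 v2 : M -> R) : \bar R :=
  ereal_inf [set s%:E | s in [set s : R | 0 < s /\ cone_le d a mu S v2 (fun x => s * v1 x)]].

Definition hilbert_theta d a mu S (v1 v2 : M -> R) : \bar R :=
  match hilbert_alpha d a mu S v1 v2, hilbert_beta d a mu S v1 v2 with
  | EFin al, EFin be => if 0 < al then (ln (be / al))%:E else +oo%E
  | _, _ => +oo%E
  end.

(* L_j rho = |det D(f|gamma_j)| / |det Df| * (rho o f) * (g(Y_1,.) o f) *)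
Definition transfer (f : M -> M) (Jleaf Jfull h rho : M -> R) : M -> R :=
  fun x => Jleaf x / Jfull x * rho (f x) * h (f x).

End Defs.

Definition tau1 {R : realType} (lam : R) : \bar R :=
  ereal_inf [set ((z - z `^ lam) / (z - z `^ (- lam)))%:E | z in [set z : R | 1 < z]].

Definition tau2 {R : realType} (lam : R) : \bar R :=
  ereal_sup [set ((z - z `^ (- lam)) / (z - z `^ lam))%:E | z in [set z : R | 1 < z]].

Definition Dbound {R : realType} (lam a : R) : R :=
  4 * a + ln (fine (tau2 lam) / fine (tau1 lam)).

From mathcomp Require Import all_boot all_order all_algebra.
From mathcomp Require Import all_classical all_reals all_analysis.
From mathcomp Require Import ring lra.
Set Implicit Arguments. Unset Strict Implicit. Unset Printing Implicit Defensive.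
Import Order.TTheory GRing.Theory Num.Theory.
Local Open Scope classical_set_scope.
Local Open Scope ring_scope.

(* Elements of D(lam a) obey the Harnack bound rho x <= rho y * e^(lam a) on a leaf of
   diameter at most 1, and r2 - t r1 lies in D(a) as soon as t r1 <= tau1 r2 pointwise:
   with z = e^(a d(x,y)^mu), so that z^lam is the Harnack factor of D(lam a), the cone
   condition reduces to tau1 (z - z^-lam) <= z - z^lam, which is the definition of tau1
   (symmetrically, r2 <= s r1 in D(a) once tau2 r2 <= s r1).  Comparing r1 and r2 with their
   values at one base point y0 gives t = tau1 e^(-2 lam a) r2(y0)/r1(y0) and
   s = tau2 e^(2 lam a) r2(y0)/r1(y0), hence theta_a(r1, r2) <= ln (tau2/tau1) + 4 lam a.
   The bounds e^-x >= 1 - x and e^-x (1 + x) <= 1 give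
   (z - z^lam)/(z - z^-lam) >= (1 - lam)/(2 (1 + lam)), so tau1 > 0 and tau2 < oo.
   Finally the transfer operator maps D(a') into D((a' + G) lams^mu + K1 + K2) = D(lam a),
   because f contracts leaves by lams and the weight Jleaf / Jfull * h o f is log-Lipschitz. *)

Section Tau.
Variable R : realType.
Implicit Types lam u z T : R.

Lemma expR_ratio_ge lam u : 0 < lam < 1 -> 0 < u ->
  (1 - lam) / (2 * (1 + lam)) * (expR u - expR (- (lam * u)))
    <= expR u - expR (lam * u).
Proof.
move=> /andP[l0 l1] u0.
set X := expR (- ((1 - lam) * u)); set Y := expR (- ((1 + lam) * u)).
have EX : expR (lam * u) = expR u * X by rewrite /X -expRD; congr expR; ring.
have EY : expR (- (lam * u)) = expR u * Y by rewrite /Y -expRD; congr expR; ring.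
have X0 : 0 < X by exact: expR_gt0.
have HX : X * (1 + (1 - lam) * u) <= 1.
  have h1 := expR_ge1Dx ((1 - lam) * u).
  have h2 : X * expR ((1 - lam) * u) = 1 by rewrite /X -expRD addNr expR0.
  nra.
have HY : 1 - (1 + lam) * u <= Y.
  by have := expR_ge1Dx (- ((1 + lam) * u)); rewrite /Y; lra.
have Y1 : Y <= 1 by rewrite -expR0 ler_expR; nra.
rewrite EX EY.
have kE : (1 - lam) / (2 * (1 + lam)) * (2 * (1 + lam)) = 1 - lam.
  by rewrite divfK //; lra.
have k0 : 0 < (1 - lam) / (2 * (1 + lam)) by apply: divr_gt0; lra.
set k := (1 - lam) / (2 * (1 + lam)) in kE k0 *.
suff H : k * (1 - Y) <= 1 - X by have E0 := expR_gt0 u; nra.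
(* for (1 - lam) u >= 1 use X <= 1/2 and k <= 1/2; otherwise linearize X and Y *)
have [pu1|pu1] := lerP 1 ((1 - lam) * u).
- have : X * 2 <= 1 by nra.
  have Y0 : 0 < Y by exact: expR_gt0.
  have : k * (1 - Y) <= k by nra.
  nra.
- have pu0 : 0 < (1 - lam) * u by nra.
  have X1 : X <= 1 by nra.
  have h3 : (1 - lam) * u <= (1 - X) * (1 + (1 - lam) * u) by nra.
  have h4 : (1 - lam) * u <= 2 * (1 - X) by nra.
  have h5 : k * (1 - Y) <= k * ((1 + lam) * u) by apply: ler_wpM2l; lra.
  have h6 : k * ((1 + lam) * u) = (1 - lam) * u / 2 by rewrite -kE; field.
  lra.
Qed.

Lemma powR_ratio_bounds lam z : 0 < lam < 1 -> 1 < z ->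
  let k := (1 - lam) / (2 * (1 + lam)) in
  [/\ k <= (z - z `^ lam) / (z - z `^ (- lam)),
      (z - z `^ lam) / (z - z `^ (- lam)) < 1,
      1 < (z - z `^ (- lam)) / (z - z `^ lam) &
      (z - z `^ (- lam)) / (z - z `^ lam) <= k^-1].
Proof.
move=> hl z1 k; have /andP[l0 l1] := hl.
have u0 : 0 < ln z by rewrite -ln1 ltr_ln ?posrE //; lra.
rewrite -[z]lnK ?posrE; last lra.
rewrite -!expRM mulrN !(mulrC (ln z)); set u := ln z in u0 *.
have K := expR_ratio_ge hl u0; rewrite -/k in K.
have BA : expR (- (lam * u)) < expR (lam * u) by rewrite ltr_expR; nra.
have AE : expR (lam * u) < expR u by rewrite ltr_expR; nra.
have k0 : 0 < k by apply: divr_gt0; lra.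
have d1 : 0 < expR u - expR (- (lam * u)) by lra.
have d2 : 0 < expR u - expR (lam * u) by lra.
split.
- by rewrite ler_pdivlMr.
- by rewrite ltr_pdivrMr // mul1r; lra.
- by rewrite ltr_pdivlMr // mul1r; lra.
- by rewrite ler_pdivrMr // -[X in X <= _](mulKf (lt0r_neq0 k0)) ler_pM2l ?invr_gt0.
Qed.

Lemma ereal_inf_image_EFin (A : set R) (g : R -> R) k : A !=set0 ->
    (forall z, A z -> k <= g z) ->
  exists2 T, ereal_inf [set (g z)%:E | z in A] = T%:E &
    k <= T /\ forall z, A z -> T <= g z.
Proof.
move=> [z0 Az0] kg.
have ub : (ereal_inf [set (g z)%:E | z in A] <= (g z0)%:E)%E.
  by apply: ereal_inf_lbound; exists z0.
have lb : (k%:E <= ereal_inf [set (g z)%:E | z in A])%E.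
  by apply: le_ereal_inf_tmp => _ [z Az <-]; rewrite lee_fin; exact: kg.
move: ub lb; case: (ereal_inf _) (@ereal_inf_lbound _ [set (g z)%:E | z in A]) => //
  T glb _ kT; exists T => //; split; first by rewrite -lee_fin.
by move=> z Az; rewrite -lee_fin; apply: glb; exists z.
Qed.

Lemma ereal_sup_image_EFin (A : set R) (g : R -> R) k : A !=set0 ->
    (forall z, A z -> g z <= k) ->
  exists2 T, ereal_sup [set (g z)%:E | z in A] = T%:E &
    T <= k /\ forall z, A z -> g z <= T.
Proof.
move=> [z0 Az0] gk.
have lb : ((g z0)%:E <= ereal_sup [set (g z)%:E | z in A])%E.
  by apply: ereal_sup_ubound; exists z0.
have ub : (ereal_sup [set (g z)%:E | z in A] <= k%:E)%E.
  by apply: ge_ereal_sup => _ [z Az <-]; rewrite lee_fin; exact: gk.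
move: lb ub; case: (ereal_sup _) (@ereal_sup_ubound _ [set (g z)%:E | z in A]) => //
  T gub _ Tk; exists T => //; split; first by rewrite -lee_fin.
by move=> z Az; rewrite -lee_fin; apply: gub; exists z.
Qed.

Lemma tau1_EFin lam : 0 < lam < 1 -> exists2 T, tau1 lam = T%:E &
  [/\ 0 < T, T < 1 & forall z, 1 < z -> T <= (z - z `^ lam) / (z - z `^ (- lam))].
Proof.
move=> hl; have /andP[l0 l1] := hl; have two_gt1 : (1 : R) < 2 by lra.
have [||T eT [kT Tle]] := @ereal_inf_image_EFin [set z | 1 < z]
  (fun z => (z - z `^ lam) / (z - z `^ (- lam))) ((1 - lam) / (2 * (1 + lam))).
- by exists 2.
- by move=> z z1; have [] := powR_ratio_bounds hl z1.
exists T => //; split => //.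
- by apply: lt_le_trans kT; apply: divr_gt0; lra.
- by have [_ + _ _] := powR_ratio_bounds hl two_gt1; exact/le_lt_trans/Tle.
Qed.

Lemma tau2_EFin lam : 0 < lam < 1 -> exists2 T, tau2 lam = T%:E &
  1 < T /\ forall z, 1 < z -> (z - z `^ (- lam)) / (z - z `^ lam) <= T.
Proof.
move=> hl; have two_gt1 : (1 : R) < 2 by lra.
have [||T eT [_ leT]] := @ereal_sup_image_EFin [set z | 1 < z]
  (fun z => (z - z `^ (- lam)) / (z - z `^ lam)) ((1 - lam) / (2 * (1 + lam)))^-1.
- by exists 2.
- by move=> z z1; have [] := powR_ratio_bounds hl z1.
exists T => //; split => //.
by have [_ _ + _] := powR_ratio_bounds hl two_gt1; move/lt_le_trans; apply; exact: leT.
Qed.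

Lemma expR_tau1_ge lam T u : 0 < lam < 1 -> 0 <= u ->
    (forall z, 1 < z -> T <= (z - z `^ lam) / (z - z `^ (- lam))) ->
  T * (expR u - expR (- (lam * u))) <= expR u - expR (lam * u).
Proof.
move=> /andP[l0 l1]; rewrite le_eqVlt => /predU1P[<- _|u0 Tle].
  by rewrite !mulr0 oppr0 !subrr mulr0.
have := Tle (expR u); rewrite -!expRM mulrN !(mulrC u) -expR0 ltr_expR => /(_ u0).
by rewrite ler_pdivlMr // subr_gt0 ltr_expR; nra.
Qed.

Lemma expR_tau2_le lam T u : 0 < lam < 1 -> 0 <= u ->
    (forall z, 1 < z -> (z - z `^ (- lam)) / (z - z `^ lam) <= T) ->
  expR u - expR (- (lam * u)) <= T * (expR u - expR (lam * u)).
Proof.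
move=> /andP[l0 l1]; rewrite le_eqVlt => /predU1P[<- _|u0 leT].
  by rewrite !mulr0 oppr0 !subrr mulr0.
have := leT (expR u); rewrite -!expRM mulrN !(mulrC u) -expR0 ltr_expR => /(_ u0).
by rewrite ler_pdivrMr // subr_gt0 ltr_expR; nra.
Qed.

End Tau.

Section HilbertMetric.
Context {R : realType} {M : Type} (d : M -> M -> R) (a mu : R) (S : set M).

Lemma cone_le_pointwise (v w : M -> R) x :
  cone_le d a mu S v w -> S x -> v x <= w x.
Proof.
case=> [[pos _]|eq_wv] Sx; last by rewrite eq_wv.
by have := pos x Sx; rewrite subr_gt0 => /ltW.
Qed.

Lemma hilbert_alpha_le (v1 v2 : M -> R) y : S y -> 0 < v1 y ->
  (hilbert_alpha d a mu S v1 v2 <= (v2 y / v1 y)%:E)%E.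
Proof.
move=> Sy v1y; apply: ge_ereal_sup => _ [t [_ le_tv] <-].
by rewrite lee_fin ler_pdivlMr //; exact: cone_le_pointwise le_tv Sy.
Qed.

Lemma hilbert_beta_ge (v1 v2 : M -> R) y : S y -> 0 < v1 y ->
  ((v2 y / v1 y)%:E <= hilbert_beta d a mu S v1 v2)%E.
Proof.
move=> Sy v1y; apply: le_ereal_inf_tmp => _ [s [_ le_vs] <-].
by rewrite lee_fin ler_pdivrMr //; exact: cone_le_pointwise le_vs Sy.
Qed.

Lemma hilbert_theta_le (v1 v2 : M -> R) y t s : S y -> 0 < v1 y -> 0 < t ->
    cone_le d a mu S (fun x => t * v1 x) v2 ->
    cone_le d a mu S v2 (fun x => s * v1 x) ->
  (hilbert_theta d a mu S v1 v2 <= (ln (s / t))%:E)%E.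
Proof.
move=> Sy v1y t0 le_tv le_vs.
have v2y : 0 < v2 y.
  by apply: lt_le_trans (cone_le_pointwise le_tv Sy); rewrite mulr_gt0.
have s0 : 0 < s.
  by have := lt_le_trans v2y (cone_le_pointwise le_vs Sy); rewrite pmulr_lgt0.
have t_le : (t%:E <= hilbert_alpha d a mu S v1 v2)%E.
  by apply: ereal_sup_ubound; exists t.
have le_s : (hilbert_beta d a mu S v1 v2 <= s%:E)%E.
  by apply: ereal_inf_lbound; exists s.
rewrite /hilbert_theta.
move: (hilbert_beta_ge v2 Sy v1y) t_le le_s (hilbert_alpha_le v2 Sy v1y).
case: (hilbert_alpha _ _ _ _ _ _) => [al| |]; case: (hilbert_beta _ _ _ _ _ _) => [be| |] //=.
rewrite !lee_fin => c_be t_al be_s al_c.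
have al0 : 0 < al := lt_le_trans t0 t_al.
have be0 : 0 < be by apply: lt_le_trans c_be; rewrite divr_gt0.
rewrite al0 lee_fin ler_ln ?posrE ?divr_gt0 //.
by rewrite ler_pdivrMr // mulrAC ler_pdivlMr // ler_pM // ltW.
Qed.

End HilbertMetric.

Section ConeDiameter.
Context {R : realType} {M : Type} (d : M -> M -> R) (mu : R) (S : set M).
Hypotheses (d_ge0 : forall x y, 0 <= d x y) (d_sym : forall x y, d x y = d y x).
Hypotheses (diam_S : forall x y, S x -> S y -> d x y <= 1) (mu_gt0 : 0 < mu).

Lemma powR_dist_le1 x y : S x -> S y -> d x y `^ mu <= 1.
Proof.
move=> Sx Sy; have := @ge0_ler_powR R mu (ltW mu_gt0) (d x y) 1; rewrite powR1.
by apply; rewrite ?nnegrE ?diam_S.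
Qed.

Lemma cone_harnack L (rho : M -> R) x y : 0 <= L -> cone d L mu S rho ->
  S x -> S y -> rho x <= rho y * expR L.
Proof.
move=> L0 [rho_gt0 rho_le] Sx Sy; apply: le_trans (rho_le x y Sx Sy) _.
rewrite ler_pM2l ?rho_gt0 // ler_expR ler_piMr //.
exact: powR_dist_le1.
Qed.

Lemma cone_le_scaled_tau1 lam a T t (r1 r2 : M -> R) : 0 < lam < 1 -> 0 <= a ->
    0 <= T < 1 -> 0 <= t ->
    (forall z, 1 < z -> T <= (z - z `^ lam) / (z - z `^ (- lam))) ->
    cone d (lam * a) mu S r1 -> cone d (lam * a) mu S r2 ->
    (forall y, S y -> t * r1 y <= T * r2 y) ->
  cone_le d a mu S (fun x => t * r1 x) r2.
Proof.
move=> hl a0 /andP[T0 T1] t0 Tle [r1_gt0 r1_le] [r2_gt0 r2_le] tr1_le.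
left; split=> [x Sx|x y Sx Sy].
  by have := tr1_le x Sx; have := r2_gt0 x Sx; rewrite subr_gt0; nra.
have /andP[l0 l1] := hl; set u := a * d x y `^ mu.
have u0 : 0 <= u by rewrite mulr_ge0 // powR_ge0.
have lamu : lam * a * d x y `^ mu = lam * u by rewrite mulrA.
have r1yx : r1 y <= r1 x * expR (lam * u) by rewrite -lamu d_sym; exact: r1_le.
have r2xy : r2 x <= r2 y * expR (lam * u) by rewrite -lamu; exact: r2_le.
have tau := expR_tau1_ge hl u0 Tle.
have AB : expR (lam * u) * expR (- (lam * u)) = 1 by rewrite -expRD subrr expR0.
have BE : expR (- (lam * u)) <= expR u by rewrite ler_expR; nra.
have r1x := r1_gt0 x Sx; have r1y := r1_gt0 y Sy.
have r2x := r2_gt0 x Sx; have r2y := r2_gt0 y Sy; have tr1y := tr1_le y Sy.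
have A0 := expR_gt0 (lam * u); have B0 := expR_gt0 (- (lam * u)).
set A := expR (lam * u) in A0 AB tau r1yx r2xy *.
set B := expR (- (lam * u)) in B0 AB BE tau *; set E := expR u in BE tau *.
have h1 : B * r1 y <= r1 x by nra.
have h2 : t * (B * r1 y) <= t * r1 x by nra.
have h3 : t * r1 y * (E - B) <= T * r2 y * (E - B) by nra.
have h4 : T * r2 y * (E - B) <= r2 y * (E - A) by nra.
nra.
Qed.

Lemma cone_le_scaled_tau2 lam a T s (r1 r2 : M -> R) : 0 < lam < 1 -> 0 <= a ->
    1 < T -> 0 <= s ->
    (forall z, 1 < z -> (z - z `^ (- lam)) / (z - z `^ lam) <= T) ->
    cone d (lam * a) mu S r1 -> cone d (lam * a) mu S r2 ->
    (forall y, S y -> T * r2 y <= s * r1 y) ->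
  cone_le d a mu S r2 (fun x => s * r1 x).
Proof.
move=> hl a0 T1 s0 leT [r1_gt0 r1_le] [r2_gt0 r2_le] r2_les.
left; split=> [x Sx|x y Sx Sy].
  by have := r2_les x Sx; have := r2_gt0 x Sx; rewrite subr_gt0; nra.
have /andP[l0 l1] := hl; set u := a * d x y `^ mu.
have u0 : 0 <= u by rewrite mulr_ge0 // powR_ge0.
have lamu : lam * a * d x y `^ mu = lam * u by rewrite mulrA.
have r1xy : r1 x <= r1 y * expR (lam * u) by rewrite -lamu; exact: r1_le.
have r2yx : r2 y <= r2 x * expR (lam * u) by rewrite -lamu d_sym; exact: r2_le.
have tau := expR_tau2_le hl u0 leT.
have AB : expR (lam * u) * expR (- (lam * u)) = 1 by rewrite -expRD subrr expR0.
have AE : expR (lam * u) <= expR u by rewrite ler_expR; nra.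
have r1x := r1_gt0 x Sx; have r1y := r1_gt0 y Sy.
have r2x := r2_gt0 x Sx; have r2y := r2_gt0 y Sy; have r2y_le := r2_les y Sy.
have A0 := expR_gt0 (lam * u); have B0 := expR_gt0 (- (lam * u)).
set A := expR (lam * u) in A0 AB AE tau r1xy r2yx *.
set B := expR (- (lam * u)) in B0 AB tau *; set E := expR u in AE tau *.
have h1 : B * r2 y <= r2 x by nra.
have h2 : s * r1 x <= s * (r1 y * A) by nra.
have h3 : T * r2 y * (E - A) <= s * r1 y * (E - A) by nra.
have h4 : r2 y * (E - B) <= T * r2 y * (E - A) by nra.
nra.
Qed.

Lemma hilbert_theta_cone_le lam a T1 T2 (r1 r2 : M -> R) :
    0 < lam < 1 -> 0 < a -> S !=set0 -> 0 < T1 < 1 -> 1 < T2 ->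
    (forall z, 1 < z -> T1 <= (z - z `^ lam) / (z - z `^ (- lam))) ->
    (forall z, 1 < z -> (z - z `^ (- lam)) / (z - z `^ lam) <= T2) ->
    cone d (lam * a) mu S r1 -> cone d (lam * a) mu S r2 ->
  (hilbert_theta d a mu S r1 r2 <= (ln (T2 / T1) + 4 * (lam * a))%:E)%E.
Proof.
move=> hl a0 [y0 Sy0] /andP[T1_gt0 T1_lt1] T2_gt1 T1_le le_T2 c1 c2.
have /andP[l0 l1] := hl; have T2_gt0 : 0 < T2 by lra.
have [r1_gt0 _] := c1; have [r2_gt0 _] := c2.
have r1y0 := r1_gt0 _ Sy0; have r2y0 := r2_gt0 _ Sy0.
set L := lam * a; have L0 : 0 <= L by rewrite mulr_ge0 // ltW.
set e2 := expR (2 * L); have e2_gt0 : 0 < e2 by exact: expR_gt0.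
have e2E : e2 = expR L * expR L by rewrite -expRD; congr expR; ring.
have cmp x : S x -> r2 y0 * r1 x <= r2 x * r1 y0 * e2 /\ r2 x * r1 y0 <= r2 y0 * r1 x * e2.
  move=> Sx; have r1x := r1_gt0 x Sx; have r2x := r2_gt0 x Sx.
  rewrite e2E; split.
  - have -> : r2 x * r1 y0 * (expR L * expR L) = r2 x * expR L * (r1 y0 * expR L).
      by ring.
    exact: ler_pM (ltW r2y0) (ltW r1x) (cone_harnack L0 c2 Sy0 Sx) (cone_harnack L0 c1 Sx Sy0).
  - have -> : r2 y0 * r1 x * (expR L * expR L) = r2 y0 * expR L * (r1 x * expR L).
      by ring.
    exact: ler_pM (ltW r2x) (ltW r1y0) (cone_harnack L0 c2 Sx Sy0) (cone_harnack L0 c1 Sy0 Sx).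
set t := T1 * r2 y0 / (r1 y0 * e2); set s := T2 * r2 y0 * e2 / r1 y0.
have t_gt0 : 0 < t by rewrite divr_gt0 ?mulr_gt0.
have s_gt0 : 0 < s by rewrite divr_gt0 ?mulr_gt0.
apply: le_trans (hilbert_theta_le (v2 := r2) Sy0 r1y0 t_gt0 _ _) _.
- apply: (cone_le_scaled_tau1 hl (ltW a0) _ (ltW t_gt0) T1_le c1 c2).
    by rewrite ltW.
  move=> y Sy; have [lo _] := cmp y Sy.
  rewrite /t mulrAC ler_pdivrMr ?mulr_gt0 //.
  have : T1 * (r2 y0 * r1 y) <= T1 * (r2 y * r1 y0 * e2) by rewrite ler_pM2l.
  lra.
- apply: (cone_le_scaled_tau2 hl (ltW a0) T2_gt1 (ltW s_gt0) le_T2 c1 c2).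
  move=> y Sy; have [_ hi] := cmp y Sy.
  rewrite /s mulrAC ler_pdivlMr //.
  have : T2 * (r2 y * r1 y0) <= T2 * (r2 y0 * r1 y * e2) by rewrite ler_pM2l; lra.
  lra.
have -> : s / t = T2 / T1 * expR (4 * L).
  have -> : expR (4 * L) = e2 * e2 by rewrite -expRD; congr expR; ring.
  by rewrite /s /t; field; rewrite !gt_eqF // ?mulr_gt0.
by rewrite lee_fin lnM ?posrE ?expRK ?expR_gt0 ?divr_gt0.
Qed.

Lemma hilbert_theta_le_Dbound lam a (r1 r2 : M -> R) :
    0 < lam < 1 -> 0 < a -> S !=set0 ->
    cone d (lam * a) mu S r1 -> cone d (lam * a) mu S r2 ->
  (hilbert_theta d a mu S r1 r2 <= (Dbound lam a)%:E)%E.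
Proof.
move=> hl a0 S0 c1 c2; have /andP[l0 l1] := hl.
have [T1 eT1 [T1_gt0 T1_lt1 T1_le]] := tau1_EFin hl.
have [T2 eT2 [T2_gt1 le_T2]] := tau2_EFin hl.
apply: le_trans (hilbert_theta_cone_le hl a0 S0 _ T2_gt1 T1_le le_T2 c1 c2) _.
  by rewrite T1_gt0.
by rewrite /Dbound eT1 eT2 lee_fin /= addrC lerD2r ler_pM2l // ler_piMl ?ltW.
Qed.

End ConeDiameter.

Lemma ler_mul_expR_lndist {R : realType} (u v c : R) : 0 < u -> 0 < v ->
  `|ln u - ln v| <= c -> u <= v * expR c.
Proof.
move=> u0 v0 uv; rewrite -[u]lnK ?posrE // -[v in v * _]lnK ?posrE // -expRD ler_expR.
by have := ler_norm (ln u - ln v); lra.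
Qed.

Lemma ler_powR_self {R : realType} (x mu : R) : 0 <= x <= 1 -> mu <= 1 -> x <= x `^ mu.
Proof.
move=> /andP[]; rewrite le_eqVlt => /predU1P[<- _ _|x0 x1 mu1]; first exact: powR_ge0.
by apply: ger1_powR; rewrite ?x0.
Qed.

Section TransferOperator.
Context {R : realType} {M : Type} (d : M -> M -> R) (Q : set M).
Hypothesis d_ge0 : forall x y, 0 <= d x y.
Hypothesis diam_Q : forall x y, Q x -> Q y -> d x y <= 1.

Lemma transfer_cone (mu lams a' G K1 K2 : R) (gam gamj : set M) (f : M -> M)
    (Jleaf Jfull h r : M -> R) :
    cone d a' mu gam r -> 0 < mu <= 1 -> 0 < lams -> 0 < a' -> 0 <= G -> 0 <= K1 -> 0 <= K2 ->
    gam `<=` Q -> gamj `<=` Q ->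
    (forall x, gamj x -> gam (f x)) ->
    (forall x y, gamj x -> gamj y -> d (f x) (f y) <= lams * d x y) ->
    (forall x, Q x -> 0 < Jfull x) ->
    (forall x y, Q x -> Q y -> `|ln (Jfull x) - ln (Jfull y)| <= K1 * d x y) ->
    (forall x, gamj x -> 0 < Jleaf x) ->
    (forall x y, gamj x -> gamj y -> `|ln (Jleaf x) - ln (Jleaf y)| <= K2 * d x y) ->
    (forall x, Q x -> 0 < h x) ->
    (forall x y, Q x -> Q y -> `|ln (h x) - ln (h y)| <= G * d x y) ->
  cone d ((a' + G) * lams `^ mu + (K1 + K2)) mu gamj (transfer f Jleaf Jfull h r).
Proof.
move=> [r_gt0 r_le] /andP[mu0 mu1] lams0 a'0 G0 K10 K20 gamQ gamjQ f_gam f_contr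
  Jfull_gt0 Jfull_lip Jleaf_gt0 Jleaf_lip h_gt0 h_lip.
pose w x := Jleaf x / Jfull x * h (f x).
have transferE x : transfer f Jleaf Jfull h r x = w x * r (f x) by rewrite /w mulrAC.
have w_gt0 x : gamj x -> 0 < w x.
  move=> gx; have Qx := gamjQ x gx; have Qfx := gamQ _ (f_gam x gx).
  by rewrite !mulr_gt0 ?invr_gt0 ?Jleaf_gt0 ?Jfull_gt0 ?h_gt0.
split=> [x gx|x y gx gy].
  by rewrite transferE mulr_gt0 ?w_gt0 //; apply/r_gt0/f_gam.
have Qx := gamjQ x gx; have Qy := gamjQ y gy.
have Qfx := gamQ _ (f_gam x gx); have Qfy := gamQ _ (f_gam y gy).
have rfx := r_gt0 _ (f_gam x gx); have rfy := r_gt0 _ (f_gam y gy).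
set p := lams `^ mu; set D := d x y `^ mu; set df := d (f x) (f y).
have dD : d x y <= D by rewrite ler_powR_self ?d_ge0 ?diam_Q.
have df_pow : df <= df `^ mu by rewrite ler_powR_self ?d_ge0 ?diam_Q.
have df_powD : df `^ mu <= p * D.
  have lams_ge0 := ltW lams0.
  rewrite /p /D -powRM ?d_ge0 //; apply: (ge0_ler_powR (ltW mu0)).
  - by rewrite nnegrE d_ge0.
  - by rewrite nnegrE mulr_ge0 ?d_ge0.
  - exact: f_contr.
have lnw z : gamj z -> ln (w z) = ln (Jleaf z) - ln (Jfull z) + ln (h (f z)).
  move=> gz; have Qz := gamjQ z gz; have Qfz := gamQ _ (f_gam z gz).
  by rewrite !lnM ?lnV ?posrE ?mulr_gt0 ?invr_gt0 ?Jleaf_gt0 ?Jfull_gt0 ?h_gt0.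
have w_le : w x <= w y * expR (K2 * d x y + K1 * d x y + G * df).
  apply: ler_mul_expR_lndist; rewrite ?w_gt0 ?lnw //.
  have -> : ln (Jleaf x) - ln (Jfull x) + ln (h (f x))
      - (ln (Jleaf y) - ln (Jfull y) + ln (h (f y)))
    = ln (Jleaf x) - ln (Jleaf y) - (ln (Jfull x) - ln (Jfull y))
      + (ln (h (f x)) - ln (h (f y))) by ring.
  apply: le_trans (ler_normD _ _) _; apply: lerD; last exact: h_lip.
  apply: le_trans (ler_normB _ _) _.
  by apply: lerD; [exact: Jleaf_lip|exact: Jfull_lip].
have r_le' : r (f x) <= r (f y) * expR (a' * (p * D)).
  apply: le_trans (r_le _ _ (f_gam x gx) (f_gam y gy)) _.
  by rewrite ler_pM2l // ler_expR ler_pM2l.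
rewrite !transferE.
apply: le_trans (ler_pM (ltW (w_gt0 x gx)) (ltW rfx) w_le r_le') _.
have wr_gt0 : 0 < w y * r (f y) by rewrite mulr_gt0 ?w_gt0.
rewrite mulrACA -expRD ler_pM2l // ler_expR.
have -> : ((a' + G) * p + (K1 + K2)) * D = K2 * D + K1 * D + G * (p * D) + a' * (p * D).
  by ring.
rewrite lerD2r; apply: lerD; first by apply: lerD; exact: ler_wpM2l.
exact/ler_wpM2l/(le_trans df_pow df_powD).
Qed.

End TransferOperator.

Theorem lemma4p6 (R : realType) (M : Type) (d : M -> M -> R) (Q : set M) :
  is_dist d -> (forall x y, Q x -> Q y -> d x y <= 1) ->
  (forall (a mu lam : R) (gam : set M),
     0 < a -> 0 < mu <= 1 -> 0 < lam < 1 -> gam `<=` Q -> gam !=set0 ->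
     (0 < tau1 lam)%E /\ (tau2 lam < +oo)%E /\
     (forall r1 r2 : M -> R, cone d (lam * a) mu gam r1 -> cone d (lam * a) mu gam r2 ->
        (hilbert_theta d a mu gam r1 r2 <= (Dbound lam a)%:E)%E))
  /\
  (forall (mu lams a a' G K1 K2 : R) (gam gamj : set M) (f : M -> M)
          (Jleaf Jfull h : M -> R),
     0 < mu <= 1 -> 0 < lams < 1 -> 0 < a -> 0 < a' ->
     0 <= G -> 0 <= K1 -> 0 <= K2 ->
     gam `<=` Q -> gamj `<=` Q -> gam !=set0 -> gamj !=set0 ->
     (forall x, gamj x -> gam (f x)) ->
     (forall x y, gamj x -> gamj y -> d (f x) (f y) <= lams * d x y) ->
     (forall x, Q x -> 0 < Jfull x) ->
     (forall x y, Q x -> Q y -> `|ln (Jfull x) - ln (Jfull y)| <= K1 * d x y) ->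
     (forall x, gamj x -> 0 < Jleaf x) ->
     (forall x y, gamj x -> gamj y -> `|ln (Jleaf x) - ln (Jleaf y)| <= K2 * d x y) ->
     (forall x, Q x -> 0 < h x) ->
     (forall x y, Q x -> Q y -> `|ln (h x) - ln (h y)| <= G * d x y) ->
     (a' + (G + (K1 + K2) / lams `^ mu)) * lams `^ mu / a < 1 ->
     forall r1 r2 : M -> R, cone d a' mu gam r1 -> cone d a' mu gam r2 ->
       (hilbert_theta d a mu gamj (transfer f Jleaf Jfull h r1) (transfer f Jleaf Jfull h r2)
          <= (Dbound ((a' + (G + (K1 + K2) / lams `^ mu)) * lams `^ mu / a) a)%:E)%E).
Proof.
move=> [d_ge0 [_ [d_sym _]]] diamQ; split.
  move=> a mu lam gam a0 /andP[mu0 _] hl gamQ gam0.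
  have [T1 -> [T1_gt0 _ _]] := tau1_EFin hl; have [T2 -> _] := tau2_EFin hl.
  rewrite lte_fin T1_gt0 ltry; do 2!split=> //.
  move=> r1 r2; apply: hilbert_theta_le_Dbound => // x y gx gy.
  exact: diamQ (gamQ x gx) (gamQ y gy).
move=> mu lams a a' G K1 K2 gam gamj f Jleaf Jfull h hmu /andP[lams0 _] a0 a'0 G0 K10 K20
  gamQ gamjQ _ gamj0 f_gam f_contr Jfull_gt0 Jfull_lip Jleaf_gt0 Jleaf_lip h_gt0 h_lip
  lam_lt1 r1 r2 c1 c2.
have [mu0 _] := andP hmu; have p0 : 0 < lams `^ mu by rewrite powR_gt0.
set p := lams `^ mu in p0 lam_lt1 *.
set lam := (a' + (G + (K1 + K2) / p)) * p / a in lam_lt1 *.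
have lam_gt0 : 0 < lam.
  have : 0 <= (K1 + K2) / p by rewrite divr_ge0 ?addr_ge0 // ltW.
  by move=> ?; rewrite divr_gt0 ?mulr_gt0 //; lra.
have lamE : lam * a = (a' + G) * p + (K1 + K2).
  by rewrite /lam divfK ?gt_eqF //; field; rewrite gt_eqF.
have diam_gamj x y : gamj x -> gamj y -> d x y <= 1.
  by move=> gx gy; exact: diamQ (gamjQ x gx) (gamjQ y gy).
apply: hilbert_theta_le_Dbound => //; first by rewrite lam_gt0.
  by rewrite lamE; apply: (transfer_cone d_ge0 diamQ c1).
by rewrite lamE; apply: (transfer_cone d_ge0 diamQ c2).
Qed.
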